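(* Let $f$ be a function, $x^\star$ one of its global optima with associated $(\nu,\rho)$, let $C>1$, and let $d=d(\nu,C,\rho)$. After a run of \texttt{SequOOL} with budget $n$ (deterministic feedback), the simple regret $r_n=f(x^\star)-f(x(n))$ satisfies: - if $d=0$, then $r_n\le \nu\rho^{\frac1C\lfloor n/\bar\log n\rfloor}$; - if $d>0$, then $r_n\le \nu\exp\!\Big(-\frac1d W\big(\frac{d\log(1/\rho)}{C}\lfloor n/\bar\log n\rfloor\big)\Big)$.
   Context: Let $\mathcal X$ be a set and $f:\mathcal X\to\mathbb R$ a function attaining its supremum; a point $x^\star$ with $f(x^\star)=\sup_{x\in\mathcal X}f(x)$ is a global optimum. Hierarchical partitioning $\mathcal P=\{\mathcal P_{h,i}\}$: - for every depth $h\ge 0$, the cells $\{\mathcal P_{h,i}\}_{1\le i\le I_h}$ form a partition of $\mathcal X$, and $\mathcal P_{0,1}=\mathcal X$; - each cell $\mathcal P_{h,i}$ is partitioned into finitely many children cells of depth $h+1$; - each cell has a fixed representative point $x_{h,i}\in\mathcal P_{h,i}$, and we write $f_{h,i}=f(x_{h,i})$; - for a global optimum $x^\star$, $i^\star_h$ is the index of the unique depth-$h$ cell containing $x^\star$. Local smoothness: a global optimum $x^\star$ has associated $(\nu,\rho)$, with $\nu>0$ and $\rho\in(0,1)$, if for all $h\in\mathbb N$ and all $x\in\mathcal P_{h,i^\star_h}$ we have $f(x)\ge f(x^\star)-\nu\rho^h$. Near-optimality dimension: for $\nu>0$, $C>1$, $\rho\in(0,1)$, let $\mathcal N_h(\epsilon)$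 be the number of depth-$h$ cells $\mathcal P_{h,i}$ with $\sup_{x\in\mathcal P_{h,i}}f(x)\ge f(x^\star)-\epsilon$. Define \[ d(\nu,C,\rho)=\inf\{d'\ge 0:\ \forall h\ge 0,\ \mathcal N_h(3\nu\rho^h)\le C\rho^{-d'h}\}, \] which is assumed finite. Notation: - $\bar\log n=\sum_{t=1}^n 1/t$ (the $n$-th harmonic number); - $W$ is the standard Lambert $W$ function: for $A\ge 0$, $W(A)$ is the unique $z\ge 0$ with $ze^z=A$. Deterministic feedback: evaluating a cell $\mathcal P_{h,i}$ returns $f_{h,i}$ exactly. Opening a cell means evaluating each of its children cells once. \texttt{SequOOL} with budget $n$: set $h_{\max}=\lfloor n/\bar\log n\rfloor$ and open $\mathcal P_{0,1}$. Then, for $h=1,2,\dots,h_{\max}$ in increasing order, open the $\lfloor h_{\max}/h\rfloor$ depth-$h$ cells having the largest values $f_{h,j}$ among the evaluated depth-$h$ cells (or all of them if there are fewer). Finally, output $x(n)$, a representative point $x_{h,i}$ of an evaluated cell maximizing $f_{h,i}$. *)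

From Stdlib Require Import Reals Lra Lia List Classical ClassicalEpsilon ClassicalDescription.
Import ListNotations.
Open Scope R_scope.

(* \bar log n = sum_{t=1}^n 1/t *)
Fixpoint harmonic (n : nat) : R :=
  match n with
  | O => 0
  | S k => harmonic k + / INR (S k)
  end.

Definition floorN (x : R) : nat := Z.to_nat (Int_part x).

Definition hmax (n : nat) : nat := floorN (INR n / harmonic n).

Definition LambertW (A : R) : R :=
  epsilon (inhabits 0) (fun z => 0 <= z /\ z * exp z = A).

(* Depth-h cells are indexed by i < I h;
   cell h i is the membership predicate of P_{h,i}; rep h i = x_{h,i};
   parent h j is the index of the depth-h cell containing the depth-(h+1)
   cell j (determined by the nesting; given as data for computability). *)
Definition is_hier_partition {X : Type} (I : nat -> nat)
  (cell : nat -> nat -> X -> Prop) (parent : nat -> nat -> nat)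
  (rep : nat -> nat -> X) : Prop :=
  I 0%nat = 1%nat /\
  (forall x, cell 0%nat 0%nat x) /\
  (forall h x, exists! i, (i < I h)%nat /\ cell h i x) /\
  (forall h i, (i < I h)%nat -> cell h i (rep h i)) /\
  (forall h j, (j < I (S h))%nat ->
      (parent h j < I h)%nat /\
      (forall x, cell (S h) j x -> cell h (parent h j) x)).

Definition global_opt {X : Type} (f : X -> R) (xs : X) : Prop :=
  forall x, f x <= f xs.

Definition local_smooth {X : Type} (f : X -> R) (I : nat -> nat)
  (cell : nat -> nat -> X -> Prop) (xs : X) (nu rho : R) : Prop :=
  forall h i x, (i < I h)%nat -> cell h i xs -> cell h i x ->
    f x >= f xs - nu * rho ^ h.

Fixpoint count_below (P : nat -> Prop) (m : nat) : nat :=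
  match m with
  | O => O
  | S k => (count_below P k + if excluded_middle_informative (P k) then 1 else 0)%nat
  end.

Definition cell_sup_ge {X : Type} (f : X -> R) (cell : nat -> nat -> X -> Prop)
  (h i : nat) (L : R) : Prop :=
  exists s, is_lub (fun y => exists x, cell h i x /\ y = f x) s /\ s >= L.

Definition N_h {X : Type} (f : X -> R) (I : nat -> nat)
  (cell : nat -> nat -> X -> Prop) (xs : X) (h : nat) (eps : R) : nat :=
  count_below (fun i => cell_sup_ge f cell h i (f xs - eps)) (I h).

Definition near_opt_admissible {X : Type} (f : X -> R) (I : nat -> nat)
  (cell : nat -> nat -> X -> Prop) (xs : X) (nu C rho : R) (d' : R) : Prop :=
  0 <= d' /\
  forall h, INR (N_h f I cell xs h (3 * nu * rho ^ h)) <= C * Rpower rho (- d' * INR h).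

Definition is_inf (E : R -> Prop) (m : R) : Prop :=
  (forall x, E x -> m <= x) /\ (forall b, (forall x, E x -> b <= x) -> b <= m).

(* d(nu,C,rho) = d  (in particular the infimum is finite) *)
Definition near_opt_dim {X : Type} (f : X -> R) (I : nat -> nat)
  (cell : nat -> nat -> X -> Prop) (xs : X) (nu C rho d : R) : Prop :=
  is_inf (near_opt_admissible f I cell xs nu C rho) d.

Definition children_of (I : nat -> nat) (parent : nat -> nat -> nat)
  (h : nat) (O : list nat) : list nat :=
  filter (fun j => existsb (Nat.eqb (parent h j)) O) (seq 0 (I (S h))).

Definition evaluated (I : nat -> nat) (parent : nat -> nat -> nat)
  (O : nat -> list nat) (h : nat) : list nat :=
  children_of I parent (pred h) (O (pred h)).

(* A run of SequOOL with budget n (ties broken arbitrarily):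
   O h = list of opened depth-h cells (O 0 = root), xn = output x(n). *)
Definition SequOOL_run {X : Type} (f : X -> R) (I : nat -> nat)
  (parent : nat -> nat -> nat) (rep : nat -> nat -> X)
  (n : nat) (O : nat -> list nat) (xn : X) : Prop :=
  let H := hmax n in
  let Ev := evaluated I parent O in
  O 0%nat = [0%nat] /\
  (forall h, (1 <= h <= H)%nat ->
     NoDup (O h) /\ incl (O h) (Ev h) /\
     length (O h) = Nat.min (H / h) (length (Ev h)) /\
     (forall j k, In j (O h) -> In k (Ev h) -> ~ In k (O h) ->
        f (rep h k) <= f (rep h j))) /\
  exists h i, (1 <= h <= S H)%nat /\ In i (Ev h) /\ xn = rep h i /\
    (forall h' i', (1 <= h' <= S H)%nat -> In i' (Ev h') ->
        f (rep h' i') <= f (rep h i)).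

From Stdlib Require Import ZArith Reals List Lra Lia Classical ClassicalEpsilon ClassicalDescription.
Open Scope R_scope.

(* By induction on the depth h, SequOOL opens the depth-h cell containing x* as
   long as h C rho^(-d h) <= h_max.  Otherwise that cell is evaluated but not
   opened, so it and the h_max/h opened cells all have values at least
   f(x* ) - nu rho^h (local smoothness), i.e. more than h_max/h cells are
   3 nu rho^h-near-optimal, whereas N_h(3 nu rho^h) <= C rho^(-d h) (the infimum
   defining d is attained) and h C rho^(-d h) <= h_max.  If the optimal cells are
   opened down to depth K, the optimal depth-(K+1) cell is evaluated and the
   output has regret at most nu rho^(K+1).  The largest real depth B satisfying
   the budget condition is h_max/C when d = 0, and
   W(d log(1/rho) h_max / C) / (d log(1/rho)) when d > 0, since the condition
   reads t e^t <= d log(1/rho) h_max / C for t = d log(1/rho) B. *)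

Lemma exp_le x y : x <= y -> exp x <= exp y.
Proof. intros [Hxy|<-]; [left; apply exp_increasing|]; lra. Qed.

Lemma exp_le_inv x y : exp x <= exp y -> x <= y.
Proof. intros Hxy. apply Rnot_lt_le. intros Hyx. apply exp_increasing in Hyx. lra. Qed.

Lemma ln_lt_0 x : 0 < x < 1 -> ln x < 0.
Proof. intros Hx. rewrite <- ln_1. apply ln_increasing; lra. Qed.

Lemma floorN_spec x : 0 <= x -> INR (floorN x) <= x < INR (floorN x) + 1.
Proof.
  intros Hx. unfold floorN. destruct (base_Int_part x) as [Hlo Hhi].
  assert (Hpos : (0 <= Int_part x)%Z).
  { assert (Hgt : (-1 < Int_part x)%Z) by (apply lt_IZR; lra). lia. }
  rewrite INR_IZR_INZ, Z2Nat.id by exact Hpos. lra.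
Qed.

Lemma LambertW_spec A : 0 <= A -> 0 <= LambertW A /\ LambertW A * exp (LambertW A) = A.
Proof.
  intros HA. unfold LambertW. apply epsilon_spec.
  destruct HA as [HA|<-]; [|exists 0; split; [lra|ring]].
  set (g := fun z => z * exp z - A).
  assert (Hg : continuity g).
  { apply continuity_minus; [|apply continuity_const; intros ??; reflexivity].
    apply continuity_mult; apply derivable_continuous;
      [apply derivable_id | apply derivable_exp]. }
  assert (Hexp : 1 <= exp (A + 1)) by (pose proof (exp_ineq1_le (A + 1)); lra).
  destruct (IVT g 0 (A + 1) Hg) as [z [Hz Hgz]]; unfold g in *; cbv beta in *.
  - lra.
  - rewrite Rmult_0_l. lra.
  - nra.
  - exists z. split; lra.
Qed.

Lemma mul_exp_le_of_le_LambertW A t :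
  0 <= A -> 0 <= t -> t <= LambertW A -> t * exp t <= A.
Proof.
  intros HA Ht HtW. destruct (LambertW_spec A HA) as [HW0 HW].
  rewrite <- HW. apply Rmult_le_compat; auto using exp_le.
  left; apply exp_pos.
Qed.

Lemma is_inf_exp_bound (E : R -> Prop) m N C a :
  is_inf E m -> 0 < C -> 0 <= a ->
  (forall x, E x -> N <= C * exp (a * x)) -> N <= C * exp (a * m).
Proof.
  intros [_ Hglb] HC Ha HN.
  assert (HE : exists x, E x).
  { apply NNPP. intros Hempty. enough (m + 1 <= m) by lra.
    apply Hglb. intros x Ex. exfalso. eauto. }
  destruct HE as [x0 Ex0].
  destruct Ha as [Ha|<-].
  2:{ specialize (HN x0 Ex0). rewrite Rmult_0_l in *. exact HN. }
  destruct (Rle_lt_dec N 0) as [HN0|HN0].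
  { pose proof (exp_pos (a * m)). nra. }
  set (x1 := ln (N / C) / a).
  assert (Hx1 : exp (a * x1) = N / C).
  { unfold x1. replace (a * (ln (N / C) / a)) with (ln (N / C)) by (field; lra).
    apply exp_ln. apply Rdiv_lt_0_compat; lra. }
  assert (Hx1m : x1 <= m).
  { apply Hglb. intros x Ex. apply Rmult_le_reg_l with a; [lra|].
    apply exp_le_inv. rewrite Hx1.
    apply Rmult_le_reg_l with C; [lra|]. unfold Rdiv.
    rewrite <- Rmult_assoc, Rinv_r_simpl_m by lra. auto. }
  replace N with (C * exp (a * x1)) by (rewrite Hx1; field; lra).
  apply Rmult_le_compat_l; [lra|]. apply exp_le. nra.
Qed.

Lemma near_opt_dim_admissible {X : Type} (f : X -> R) I cell xs nu C rho d :
  0 < C -> 0 < rho < 1 -> near_opt_dim f I cell xs nu C rho d ->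
  near_opt_admissible f I cell xs nu C rho d.
Proof.
  intros HC Hrho Hd. split.
  - apply (proj2 Hd). intros x [Hx _]. exact Hx.
  - intros h. unfold Rpower.
    replace (- d * INR h * ln rho) with (- INR h * ln rho * d) by ring.
    apply (is_inf_exp_bound _ _ _ _ _ Hd); [exact HC| |].
    + pose proof (pos_INR h). pose proof (ln_lt_0 rho Hrho). nra.
    + intros x [_ Hx]. specialize (Hx h). unfold Rpower in Hx.
      replace (- x * INR h * ln rho) with (- INR h * ln rho * x) in Hx by ring.
      exact Hx.
Qed.

Lemma in_evaluated_succ I parent O h k :
  In k (evaluated I parent O (S h)) <-> (k < I (S h))%nat /\ In (parent h k) (O h).
Proof.
  unfold evaluated, children_of. simpl. rewrite filter_In, in_seq, existsb_exists.
  split.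
  - intros [Hk [j [Hj Hpj]]]. apply Nat.eqb_eq in Hpj. subst j. split; [lia | exact Hj].
  - intros [Hk Hp]. split; [lia|]. exists (parent h k). auto using Nat.eqb_refl.
Qed.

Lemma count_below_NoDup (P : nat -> Prop) m l :
  NoDup l -> (forall k, In k l -> (k < m)%nat /\ P k) -> (length l <= count_below P m)%nat.
Proof.
  intros Hl HlP.
  assert (Hcount : count_below P m =
    length (filter (fun k => if excluded_middle_informative (P k) then true else false) (seq 0 m))).
  { clear HlP. induction m as [|m IH]; [reflexivity|]. cbn [count_below].
    rewrite seq_S, filter_app, length_app, IH. simpl.
    destruct (excluded_middle_informative (P m)); simpl; lia. }
  rewrite Hcount. apply NoDup_incl_length; [exact Hl|].
  intros k Hk. destruct (HlP k Hk) as [Hkm HPk]. apply filter_In. rewrite in_seq.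
  split; [lia|]. destruct (excluded_middle_informative (P k)); tauto.
Qed.

Definition within_budget (C rho d : R) (H h : nat) : Prop :=
  INR h * C * Rpower rho (- d * INR h) <= INR H.

Lemma within_budget_lt C rho d H h :
  1 < C -> 0 < rho < 1 -> 0 <= d -> (1 <= h)%nat -> within_budget C rho d H h -> (h < H)%nat.
Proof.
  intros HC Hrho Hd Hh Hbudget. apply INR_lt.
  assert (H1h : 1 <= INR h) by (apply (le_INR 1); exact Hh).
  assert (Hpow : 1 <= Rpower rho (- d * INR h)).
  { unfold Rpower. rewrite <- exp_0. apply exp_le.
    assert (0 <= d * INR h) by nra. pose proof (ln_lt_0 rho Hrho). nra. }
  assert (INR h * C <= INR h * C * Rpower rho (- d * INR h)).
  { rewrite <- (Rmult_1_r (INR h * C)) at 1. apply Rmult_le_compat_l; nra. }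
  unfold within_budget in Hbudget. nra.
Qed.

Section SequOOL_analysis.

Variables (X : Type) (f : X -> R) (I : nat -> nat) (cell : nat -> nat -> X -> Prop)
  (parent : nat -> nat -> nat) (rep : nat -> nat -> X).
Hypothesis Hpart : is_hier_partition I cell parent rep.
Variable xs : X.
Hypothesis Hopt : global_opt f xs.

Lemma cell_sup_ge_rep h i L : (i < I h)%nat -> L <= f (rep h i) -> cell_sup_ge f cell h i L.
Proof.
  intros Hi HL. destruct Hpart as (_ & _ & _ & Hrep & _).
  set (E := fun y => exists x, cell h i x /\ y = f x).
  destruct (completeness E) as [s Hs].
  - exists (f xs). intros y [x [_ ->]]. apply Hopt.
  - exists (f (rep h i)), (rep h i). auto.
  - exists s. split; [exact Hs|].
    enough (f (rep h i) <= s) by lra. apply Hs. exists (rep h i). auto.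
Qed.

Variables (n : nat) (O : nat -> list nat) (xn : X).
Hypothesis Hrun : SequOOL_run f I parent rep n O xn.

Lemma SequOOL_unopened_count h i L :
  (S h <= hmax n)%nat -> In i (evaluated I parent O (S h)) -> ~ In i (O (S h)) ->
  L <= f (rep (S h) i) ->
  (S (hmax n / S h) <= count_below (fun k => cell_sup_ge f cell (S h) k L) (I (S h)))%nat.
Proof.
  intros Hh Hi Hnot HL. destruct Hrun as (_ & Hstep & _).
  destruct (Hstep (S h)) as (Hnd & Hincl & Hlen & Hbest); [lia|].
  assert (Hlong : (length (i :: O (S h)) <= length (evaluated I parent O (S h)))%nat).
  { apply NoDup_incl_length; [constructor; assumption|].
    intros k [<-|Hk]; auto. }
  simpl in Hlong. replace (hmax n / S h)%nat with (length (O (S h))) by lia.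
  change (S (length (O (S h)))) with (length (i :: O (S h))).
  apply count_below_NoDup; [constructor; assumption|].
  intros k Hk.
  assert (Hkev : In k (evaluated I parent O (S h))) by (destruct Hk as [<-|Hk]; auto).
  apply in_evaluated_succ in Hkev as [HkI _]. split; [exact HkI|].
  apply cell_sup_ge_rep; [exact HkI|].
  destruct Hk as [<-|Hk]; [exact HL|].
  specialize (Hbest k i Hk Hi Hnot). lra.
Qed.

Variables (nu rho : R).
Hypotheses (Hnu : 0 < nu) (Hrho : 0 < rho < 1).
Hypothesis Hsmooth : local_smooth f I cell xs nu rho.

Lemma SequOOL_opens_optimal_cells C d K :
  1 < C -> near_opt_admissible f I cell xs nu C rho d ->
  (forall h, (1 <= h <= K)%nat -> within_budget C rho d (hmax n) h) ->
  forall h i, (h <= K)%nat -> (i < I h)%nat -> cell h i xs -> In i (O h).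
Proof.
  intros HC [Hd0 HN] Hbudget.
  pose proof Hpart as (HI0 & _ & _ & _ & Hparent).
  induction h as [|h IH]; intros i HhK Hi Hxs.
  - destruct Hrun as (HO0 & _). rewrite HO0. rewrite HI0 in Hi. left; lia.
  - destruct (Hparent h i Hi) as [Hpi Hpcell].
    assert (Hev : In i (evaluated I parent O (S h))).
    { apply in_evaluated_succ. split; [exact Hi|]. apply IH; auto; lia. }
    assert (Hb : within_budget C rho d (hmax n) (S h)) by (apply Hbudget; lia).
    assert (HhH : (S h < hmax n)%nat) by (apply (within_budget_lt C rho d); auto; lia).
    apply NNPP. intros Hnot.
    assert (Hrep : f xs - 3 * nu * rho ^ S h <= f (rep (S h) i)).
    { pose proof Hpart as (_ & _ & _ & Hrep & _).
      pose proof (Hsmooth (S h) i (rep (S h) i) Hi Hxs (Hrep _ _ Hi)).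
      pose proof (pow_lt rho (S h) (proj1 Hrho)). nra. }
    assert (Hcount := SequOOL_unopened_count h i _ ltac:(lia) Hev Hnot Hrep).
    (* S h * S (h_max / S h) > h_max, while the budget bounds S h * N_{S h} by h_max *)
    apply le_INR in Hcount. fold (N_h f I cell xs (S h) (3 * nu * rho ^ S h)) in Hcount.
    pose proof (Nat.mul_succ_div_gt (hmax n) (S h) ltac:(lia)) as Hdiv.
    apply lt_INR in Hdiv. rewrite mult_INR in Hdiv.
    specialize (HN (S h)). unfold within_budget in Hb.
    assert (0 < INR (S h)) by (apply lt_0_INR; lia).
    nra.
Qed.

Lemma SequOOL_regret_le_pow K :
  (K <= hmax n)%nat ->
  (forall i, (i < I K)%nat -> cell K i xs -> In i (O K)) ->
  f xs - f xn <= nu * rho ^ S K.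
Proof.
  intros HK Hopened.
  pose proof Hpart as (_ & _ & Hunique & Hrep & Hparent).
  destruct Hrun as (_ & _ & h0 & i0 & _ & _ & Hxn & Hbest).
  destruct (Hunique (S K) xs) as [i [[Hi Hxs] _]].
  destruct (Hparent K i Hi) as [Hpi Hpcell].
  assert (Hev : In i (evaluated I parent O (S K))).
  { apply in_evaluated_succ. split; [exact Hi|]. apply Hopened; auto. }
  pose proof (Hbest (S K) i ltac:(lia) Hev). subst xn.
  pose proof (Hsmooth (S K) i (rep (S K) i) Hi Hxs (Hrep _ _ Hi)).
  lra.
Qed.

Lemma SequOOL_regret_le_Rpower C d :
  1 < C -> near_opt_admissible f I cell xs nu C rho d -> forall B, 0 <= B ->
  (forall h, INR h <= B -> within_budget C rho d (hmax n) h) ->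
  f xs - f xn <= nu * Rpower rho B.
Proof.
  intros HC Hadm B HB Hbudget.
  destruct (floorN_spec B HB) as [HKB HBK]. set (K := floorN B) in *.
  assert (HbudgetK : forall h, (1 <= h <= K)%nat -> within_budget C rho d (hmax n) h).
  { intros h Hh. apply Hbudget. apply Rle_trans with (INR K); [apply le_INR; lia | exact HKB]. }
  assert (HKH : (K <= hmax n)%nat).
  { destruct K as [|k]; [lia|]. apply Nat.lt_le_incl.
    apply (within_budget_lt C rho d (hmax n) (S k));
      [lra | exact Hrho | apply Hadm | lia | apply Hbudget, HKB]. }
  apply Rle_trans with (nu * rho ^ S K).
  - apply SequOOL_regret_le_pow; [exact HKH|].
    intros i Hi Hxs. apply (SequOOL_opens_optimal_cells C d K); auto.
  - apply Rmult_le_compat_l; [lra|].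
    rewrite <- Rpower_pow by apply Hrho. unfold Rpower. apply exp_le.
    rewrite S_INR. pose proof (ln_lt_0 rho Hrho). nra.
Qed.

End SequOOL_analysis.

Lemma within_budget_dim0 C rho H h :
  0 < C -> 0 < rho -> INR h <= / C * INR H -> within_budget C rho 0 H h.
Proof.
  intros HC Hrho Hh. unfold within_budget.
  rewrite Ropp_0, Rmult_0_l, Rpower_O by exact Hrho.
  apply Rmult_le_compat_r with (r := C) in Hh; [|lra].
  replace (/ C * INR H * C) with (INR H) in Hh by (field; lra). lra.
Qed.

Lemma within_budget_LambertW C rho d H h :
  0 < C -> 0 < rho < 1 -> 0 < d ->
  INR h <= LambertW (d * ln (/ rho) / C * INR H) / (d * ln (/ rho)) ->
  within_budget C rho d H h.
Proof.
  intros HC Hrho Hd Hh. unfold within_budget.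
  assert (Hpow : Rpower rho (- d * INR h) = exp (d * ln (/ rho) * INR h)).
  { unfold Rpower. rewrite ln_Rinv by apply Hrho. f_equal. ring. }
  assert (Ha : 0 < d * ln (/ rho)).
  { rewrite ln_Rinv by apply Hrho. pose proof (ln_lt_0 rho Hrho). nra. }
  rewrite Hpow. set (a := d * ln (/ rho)) in *.
  assert (HA : 0 <= a / C * INR H).
  { pose proof (pos_INR H). apply Rmult_le_pos; [apply Rlt_le, Rdiv_lt_0_compat|]; lra. }
  assert (Hexp : a * INR h * exp (a * INR h) <= a / C * INR H).
  { apply mul_exp_le_of_le_LambertW; [exact HA | pose proof (pos_INR h); nra |].
    apply Rmult_le_compat_l with (r := a) in Hh; [|lra].
    replace (a * (LambertW (a / C * INR H) / a)) with (LambertW (a / C * INR H)) in Hh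
      by (field; lra).
    exact Hh. }
  apply Rmult_le_reg_l with (a / C); [apply Rdiv_lt_0_compat; lra|].
  replace (a / C * (INR h * C * exp (a * INR h))) with (a * INR h * exp (a * INR h))
    by (field; lra).
  exact Hexp.
Qed.

Theorem theorem2 (X : Type) (f : X -> R) (I : nat -> nat)
  (cell : nat -> nat -> X -> Prop) (parent : nat -> nat -> nat)
  (rep : nat -> nat -> X)
  (Hpart : is_hier_partition I cell parent rep)
  (xs : X) (Hopt : global_opt f xs)
  (nu rho : R) (Hnu : 0 < nu) (Hrho0 : 0 < rho) (Hrho1 : rho < 1)
  (Hsmooth : local_smooth f I cell xs nu rho)
  (C : R) (HC : 1 < C)
  (d : R) (Hd : near_opt_dim f I cell xs nu C rho d)
  (n : nat) (Hn : (1 <= n)%nat)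
  (O : nat -> list nat) (xn : X)
  (Hrun : SequOOL_run f I parent rep n O xn) :
  (d = 0 -> f xs - f xn <= nu * Rpower rho (/ C * INR (hmax n))) /\
  (0 < d -> f xs - f xn <=
     nu * exp (- (/ d) * LambertW (d * ln (/ rho) / C * INR (hmax n)))).
Proof.
  assert (Hrho : 0 < rho < 1) by lra.
  assert (Hadm := near_opt_dim_admissible f I cell xs nu C rho d ltac:(lra) Hrho Hd).
  pose proof (SequOOL_regret_le_Rpower X f I cell parent rep Hpart xs Hopt n O xn Hrun
                nu rho Hnu Hrho Hsmooth C d HC Hadm) as Hregret.
  pose proof (pos_INR (hmax n)) as HH.
  assert (HL : 0 < ln (/ rho)) by (rewrite ln_Rinv by lra; pose proof (ln_lt_0 rho Hrho); lra).
  split.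
  - intros ->. apply Hregret.
    + apply Rmult_le_pos; [apply Rlt_le, Rinv_0_lt_compat|]; lra.
    + intros h Hh. apply within_budget_dim0; lra.
  - intros Hdpos. set (A := d * ln (/ rho) / C * INR (hmax n)).
    assert (HA : 0 <= A).
    { apply Rmult_le_pos; [apply Rlt_le, Rdiv_lt_0_compat; nra | exact HH]. }
    destruct (LambertW_spec A HA) as [HW0 _].
    replace (exp (- / d * LambertW A)) with (Rpower rho (LambertW A / (d * ln (/ rho)))).
    2:{ unfold Rpower. rewrite ln_Rinv in * by lra. f_equal. field. lra. }
    apply Hregret.
    + apply Rmult_le_pos; [exact HW0 | apply Rlt_le, Rinv_0_lt_compat; nra].
    + intros h Hh. apply within_budget_LambertW; auto; lra.
Qed.
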